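(* Let $\Phi:\{0,1\}^n\to\{0,1\}^n$, $\mu\in\{0,1\}^n$ and $\rho\in P_n$. Then: a) $\overline{W}[\Phi^\rho(\mu,\cdot)]=\overline{W}[\omega_\rho(\mu)]$; b) $Or_\rho(\mu)\subset\overline{W}[\Phi^\rho(\mu,\cdot)]$, so $\overline{W}[\Phi^\rho(\mu,\cdot)]\neq\emptyset$; c) $\underline{W}[\Phi^\rho(\mu,\cdot)]\subset\underline{W}[\omega_\rho(\mu)]$; d) $\underline{W}[\Phi^\rho(\mu,\cdot)]\neq\emptyset$ if and only if $\omega_\rho(\mu)$ has exactly one element; thus if $\omega_\rho(\mu)$ has exactly one element, then $\underline{W}[\Phi^\rho(\mu,\cdot)]$ and $\underline{W}[\omega_\rho(\mu)]$ are non-empty; e) if $\omega_\rho(\mu)=\{\mu'\}$ for some $\mu'\in\mathbf{B}^n$, then $\underline{W}[\Phi^\rho(\mu,\cdot)]=\underline{W}[\omega_\rho(\mu)]=\underline{W}(\mu')$.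
   Context: Let $\mathbf{B}=\{0,1\}$ (discrete topology), $n\ge1$, $\Phi:\mathbf{B}^n\to\mathbf{B}^n$. For $\nu\in\mathbf{B}^n$: $\Phi^\nu_i(\mu)=\mu_i$ if $\nu_i=0$, $=\Phi_i(\mu)$ if $\nu_i=1$; $\Phi^{\alpha^0\dots\alpha^k}=\Phi^{\alpha^k}\circ\cdots\circ\Phi^{\alpha^0}$. A sequence $(\alpha^k)_{k\in\mathbf{N}}$ in $\mathbf{B}^n$ is progressive if each $\{k:\alpha^k_i=1\}$ is infinite. $Seq$ = strictly increasing real sequences unbounded above. $P_n$ = functions $\rho:\mathbf{R}\to\mathbf{B}^n$ with $\rho(t_k)=\alpha^k$, $\rho(t)=0$ for $t\notin\{t_k\}$, where $\alpha$ progressive, $(t_k)\in Seq$. Orbit: $\Phi^\rho(\mu,t)=\mu$ for $t<t_0$, $=\Phi^{\alpha^0\dots\alpha^k}(\mu)$ for $t\in[t_k,t_{k+1})$; $Or_\rho(\mu)=\{\Phi^\rho(\mu,t):t\in\mathbf{R}\}$. $\omega_\rho(\mu)=\{\mu':\exists(s_k)\in Seq,\ \Phi^\rho(\mu,s_k)=\mu'$ for all large $k\}$. For a point $\mu'$: $\underline{W}(\mu')=\{\mu'':\forall\rho'\in P_n,\ \omega_{\rho'}(\mu'')\subset\{\mu'\}\}$. Basins of the orbit and of the $\omega$-limit set: $\overline{W}[\Phi^\rho(\mu,\cdot)]=\{\mu':\exists\rho'\in P_n,\exists t'\in\mathbf{R},\forall t\ge t',\ \Phi^{\rho'}(\mu',t)=\Phi^\rho(\mu,t)\}$,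 $\underline{W}[\Phi^\rho(\mu,\cdot)]=\{\mu':\forall\rho'\in P_n,\exists t'\in\mathbf{R},\forall t\ge t',\ \Phi^{\rho'}(\mu',t)=\Phi^\rho(\mu,t)\}$, $\overline{W}[\omega_\rho(\mu)]=\{\mu':\exists\rho'\in P_n,\ \omega_{\rho'}(\mu')=\omega_\rho(\mu)\}$, $\underline{W}[\omega_\rho(\mu)]=\{\mu':\forall\rho'\in P_n,\ \omega_{\rho'}(\mu')=\omega_\rho(\mu)\}$. *)

From Stdlib Require Import Reals ClassicalEpsilon.
From mathcomp Require Import all_boot.

Set Implicit Arguments.
Unset Strict Implicit.
Unset Printing Implicit Defensive.

Local Open Scope R_scope.

Definition Bn (n : nat) := {ffun 'I_n -> bool}.

Definition phinu (n : nat) (Phi : Bn n -> Bn n) (nu : Bn n) (mu : Bn n) : Bn n :=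
  [ffun i => if nu i then Phi mu i else mu i].

Fixpoint phicomp (n : nat) (Phi : Bn n -> Bn n) (alpha : nat -> Bn n)
    (k : nat) (mu : Bn n) : Bn n :=
  match k with
  | O => phinu Phi (alpha O) mu
  | S k' => phinu Phi (alpha (S k')) (phicomp Phi alpha k' mu)
  end.

Definition progressive (n : nat) (alpha : nat -> Bn n) : Prop :=
  forall (i : 'I_n) (k : nat), exists k', (k <= k')%coq_nat /\ alpha k' i = true.

Definition isSeq (t : nat -> R) : Prop :=
  (forall k k' : nat, (k < k')%coq_nat -> t k < t k') /\
  (forall M : R, exists k, M < t k).

(* rho in P_n, given by the data (alpha, t) *)
Definition inPn (n : nat) (alpha : nat -> Bn n) (t : nat -> R) : Prop :=
  progressive alpha /\ isSeq t.

Definition orbit (n : nat) (Phi : Bn n -> Bn n) (alpha : nat -> Bn n) (t : nat -> R)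
    (mu : Bn n) (s : R) : Bn n :=
  epsilon (inhabits mu)
    (fun x => (s < t O /\ x = mu) \/
              (exists k, t k <= s < t (S k) /\ x = phicomp Phi alpha k mu)).

Definition Or (n : nat) (Phi : Bn n -> Bn n) (alpha : nat -> Bn n) (t : nat -> R)
    (mu : Bn n) (x : Bn n) : Prop :=
  exists s : R, orbit Phi alpha t mu s = x.

Definition omega (n : nat) (Phi : Bn n -> Bn n) (alpha : nat -> Bn n) (t : nat -> R)
    (mu : Bn n) (x : Bn n) : Prop :=
  exists s : nat -> R, isSeq s /\
    exists K : nat, forall k, (K <= k)%coq_nat -> orbit Phi alpha t mu (s k) = x.

Definition Wpt (n : nat) (Phi : Bn n -> Bn n) (mu' : Bn n) (x : Bn n) : Prop :=
  forall alpha' t', inPn alpha' t' ->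
    forall y, omega Phi alpha' t' x y -> y = mu'.

Definition Wbar_orb (n : nat) (Phi : Bn n -> Bn n) (alpha : nat -> Bn n) (t : nat -> R)
    (mu : Bn n) (x : Bn n) : Prop :=
  exists alpha' t', inPn alpha' t' /\
    exists t0 : R, forall s, t0 <= s -> orbit Phi alpha' t' x s = orbit Phi alpha t mu s.

Definition Wund_orb (n : nat) (Phi : Bn n -> Bn n) (alpha : nat -> Bn n) (t : nat -> R)
    (mu : Bn n) (x : Bn n) : Prop :=
  forall alpha' t', inPn alpha' t' ->
    exists t0 : R, forall s, t0 <= s -> orbit Phi alpha' t' x s = orbit Phi alpha t mu s.

Definition Wbar_om (n : nat) (Phi : Bn n -> Bn n) (alpha : nat -> Bn n) (t : nat -> R)
    (mu : Bn n) (x : Bn n) : Prop :=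
  exists alpha' t', inPn alpha' t' /\
    forall y, omega Phi alpha' t' x y <-> omega Phi alpha t mu y.

Definition Wund_om (n : nat) (Phi : Bn n -> Bn n) (alpha : nat -> Bn n) (t : nat -> R)
    (mu : Bn n) (x : Bn n) : Prop :=
  forall alpha' t', inPn alpha' t' ->
    forall y, omega Phi alpha' t' x y <-> omega Phi alpha t mu y.

Definition sub_set (T : Type) (A B : T -> Prop) : Prop := forall x, A x -> B x.
Definition eq_set (T : Type) (A B : T -> Prop) : Prop := forall x, A x <-> B x.
Definition nonempty (T : Type) (A : T -> Prop) : Prop := exists x, A x.
Definition singleton_set (T : Type) (A : T -> Prop) : Prop :=
  exists a, forall x, A x <-> x = a.

(* All orbits live in the finite set B^n, so an orbit visits some point at
   unbounded times and omega_rho(mu) is never empty; it is a singleton {c}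
   exactly when the orbit is eventually constant, and then c is a fixed point
   of Phi because every coordinate is updated infinitely often.
   a) If x has, under some rho', the same omega-limit set as mu under rho, both
   orbits pass through a common point y; running rho' on x until it reaches y
   and then rho from the matching step on (with re-timed jumps) makes the
   orbit of x coincide with that of mu from some time on.
   d) If some x follows the orbit of mu eventually under every rho', compare
   rho = (alpha, t) with the same steps at shifted times t (k + 1): both
   orbits of x agree with that of mu, so consecutive iterates of x agree and
   the orbit of mu is eventually constant. Conversely the fixed point c
   itself lies in the basin of the orbit. *)

From Stdlib Require Import Reals Lra Lia Classical ClassicalEpsilon.
From mathcomp Require Import ssreflect ssrfun ssrbool eqtype ssrnat seq fintype finfun zify.

Set Implicit Arguments.
Unset Strict Implicit.
Unset Printing Implicit Defensive.

Local Open Scope R_scope.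

Definition eventually (P : R -> Prop) : Prop := exists T, forall s, T <= s -> P s.
Definition frequently (P : R -> Prop) : Prop := forall T, exists s, T <= s /\ P s.

Lemma eventually_and (P Q : R -> Prop) :
  eventually P -> eventually Q -> eventually (fun s => P s /\ Q s).
Proof.
move=> [T1 HP] [T2 HQ]; exists (Rmax T1 T2) => s Hs.
by split; [apply: HP | apply: HQ]; apply: Rle_trans Hs; [apply: Rmax_l | apply: Rmax_r].
Qed.

Lemma eventually_frequently (P Q : R -> Prop) :
  eventually P -> frequently Q -> frequently (fun s => P s /\ Q s).
Proof.
move=> [T1 HP] HQ T; have [s [Hs Qs]] := HQ (Rmax T1 T).
exists s; split; first exact: Rle_trans (Rmax_r _ _) Hs.
by split=> //; apply: HP; apply: Rle_trans (Rmax_l _ _) Hs.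
Qed.

Lemma frequently_mono (P Q : R -> Prop) :
  (forall s, P s -> Q s) -> frequently P -> frequently Q.
Proof. by move=> PQ HP T; have [s [Hs /PQ Qs]] := HP T; exists s. Qed.

Lemma frequently_not (P : R -> Prop) : ~ eventually P -> frequently (fun s => ~ P s).
Proof.
move=> notP T; apply: NNPP => nofreq; apply: notP; exists T => s Hs.
by apply: NNPP => nPs; apply: nofreq; exists s.
Qed.

Lemma eventually_not (P : R -> Prop) : ~ frequently P -> eventually (fun s => ~ P s).
Proof.
move=> notP; apply: NNPP => noev; apply: notP => T.
by apply: NNPP => nofreq; apply: noev; exists T => s Hs Ps; apply: nofreq; exists s.
Qed.

Lemma eventually_all_seq (A : eqType) (Q : A -> R -> Prop) (l : seq A) :
  (forall y, eventually (Q y)) -> eventually (fun s => forall y, y \in l -> Q y s).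
Proof.
move=> HQ; elim: l => [|y l IHl].
  by exists 0 => s _ y; rewrite in_nil.
have [T HT] := eventually_and (HQ y) IHl; exists T => s /HT [Qy Ql] z.
by rewrite in_cons => /orP [/eqP -> | /Ql].
Qed.

Lemma frequently_pigeonhole (A : finType) (g : R -> A) (P : R -> Prop) :
  frequently P -> exists y, frequently (fun s => P s /\ g s = y).
Proof.
move=> HP; apply: NNPP => nofreq.
have never : forall y, eventually (fun s => ~ (P s /\ g s = y)).
  by move=> y; apply: eventually_not => Hy; apply: nofreq; exists y.
have [s [_ [Hs Ps]]] := eventually_frequently (eventually_all_seq (enum A) never) HP 0.
by apply: (Hs (g s)); [rewrite mem_enum | split].
Qed.

Lemma strict_incr_le (t : nat -> R) :
  (forall k k', (k < k')%coq_nat -> t k < t k') ->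
  forall k k', (k <= k')%coq_nat -> t k <= t k'.
Proof.
move=> incr k k' le_kk'; case: (Nat.eq_dec k k') => [-> | ne]; first exact: Rle_refl.
by apply: Rlt_le; apply: incr; lia.
Qed.

Lemma strict_incr_of_succ (t : nat -> R) :
  (forall k, t k < t k.+1) -> forall k k', (k < k')%coq_nat -> t k < t k'.
Proof.
move=> succ k; elim=> [|k' IHk'] lt_kk'; first lia.
case: (Nat.eq_dec k k') => [-> | ne]; first exact: succ.
by apply: Rlt_trans (succ k'); apply: IHk'; lia.
Qed.

Fixpoint iterate_after (next : R -> R) (k : nat) : R :=
  if k is k'.+1 then next (iterate_after next k' + 1) else next 0.

Lemma isSeq_eventually_iff_frequently (P : R -> Prop) :
  (exists s, isSeq s /\ exists K, forall k, (K <= k)%coq_nat -> P (s k)) <->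
  frequently P.
Proof.
split.
  move=> [s [[incr unbd] [K HK]]] T; have [k0 Hk0] := unbd T.
  exists (s (Nat.max K k0)); split; last by apply: HK; lia.
  by apply: Rlt_le; apply: Rlt_le_trans Hk0 _; apply: (strict_incr_le incr); lia.
move=> HP; have [next Hnext] := ClassicalEpsilon.choice _ HP.
exists (iterate_after next); split; last by exists 0%nat => -[|k] _ /=; apply Hnext.
split.
  by apply: strict_incr_of_succ => k /=; have [? _] := Hnext (iterate_after next k + 1); lra.
have above_index : forall k, INR k <= iterate_after next k.
  elim=> [|k IHk]; rewrite ?S_INR /=; first by have [? _] := Hnext 0; lra.
  by have [? _] := Hnext (iterate_after next k + 1); lra.
move=> M; have [k Hk] := INR_unbounded M; exists k.
by have := above_index k; lra.
Qed.

Section Orbits.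
Variables (n : nat) (Phi : Bn n -> Bn n) (alpha : nat -> Bn n) (t : nat -> R).

Lemma omega_frequently x y :
  omega Phi alpha t x y <-> frequently (fun s => orbit Phi alpha t x s = y).
Proof. exact: isSeq_eventually_iff_frequently. Qed.

Lemma omega_nonempty x : exists y, omega Phi alpha t x y.
Proof.
have [y Hy] := @frequently_pigeonhole {ffun 'I_n -> bool} (orbit Phi alpha t x) (fun _ => True)
  (fun T => ex_intro _ T (conj (Rle_refl T) I)).
by exists y; apply/omega_frequently; apply: frequently_mono Hy => s [].
Qed.

Lemma eventually_orbit_of_omega x c :
  (forall y, omega Phi alpha t x y -> y = c) ->
  eventually (fun s => orbit Phi alpha t x s = c).
Proof.
move=> omega_c; apply: NNPP => /frequently_not Hfreq.
have [y Hy] := frequently_pigeonhole (orbit Phi alpha t x) Hfreq.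
have y_c : y = c.
  by apply: omega_c; apply/omega_frequently; apply: frequently_mono Hy => s [].
by have [s [_ []]] := Hy 0; rewrite y_c.
Qed.

Lemma omega_of_eventually_orbit x c :
  eventually (fun s => orbit Phi alpha t x s = c) ->
  forall y, omega Phi alpha t x y <-> y = c.
Proof.
move=> Hc y; rewrite omega_frequently; split.
  by move=> Hy; have [s [_ [<- ->]]] := eventually_frequently Hc Hy 0.
move=> -> T; have [T0 HT0] := Hc.
by exists (Rmax T0 T); split; [apply: Rmax_r | apply: HT0; apply: Rmax_l].
Qed.

Hypothesis Ht : isSeq t.

Lemma isSeq_interval s : t 0%nat <= s -> exists k, t k <= s < t k.+1.
Proof.
move: Ht => [_ unbd] Hs; have [N HN] := unbd s.
elim: N HN => [|N IHN] HN; first lra.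
case: (Rlt_le_dec s (t N)) => [lt_sN | le_Ns]; first exact: IHN.
by exists N; lra.
Qed.

Lemma orbit_spec x s :
  (s < t 0%nat /\ orbit Phi alpha t x s = x) \/
  (exists k, t k <= s < t k.+1 /\ orbit Phi alpha t x s = phicomp Phi alpha k x).
Proof.
rewrite /orbit; apply epsilon_spec.
case: (Rlt_le_dec s (t 0%nat)) => [lt_s0 | /isSeq_interval [k Hk]].
  by exists x; left.
by exists (phicomp Phi alpha k x); right; exists k.
Qed.

Lemma orbit_interval x s k :
  t k <= s < t k.+1 -> orbit Phi alpha t x s = phicomp Phi alpha k x.
Proof.
move: (Ht) => [incr _] Hk.
have le_t := strict_incr_le incr.
case: (orbit_spec x s) => [[Hs _] | [j [Hj ->]]].
  by have := le_t 0%nat k ltac:(lia); lra.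
case: (Nat.lt_total j k) => [lt_jk | [-> // | lt_kj]].
  by have := le_t j.+1 k ltac:(lia); lra.
by have := le_t k.+1 j ltac:(lia); lra.
Qed.

Lemma eventually_orbit_of_phicomp x c J :
  (forall k, (J <= k)%coq_nat -> phicomp Phi alpha k x = c) ->
  eventually (fun s => orbit Phi alpha t x s = c).
Proof.
move: (Ht) => [incr _] Hc; exists (t J) => s Hs.
have le_t := strict_incr_le incr.
case: (orbit_spec x s) => [[lt_s0 _] | [k [Hk ->]]].
  by have := le_t 0%nat J ltac:(lia); lra.
apply: Hc; case: (Nat.le_gt_cases J k) => // lt_kJ.
by have := le_t k.+1 J ltac:(lia); lra.
Qed.

Lemma phicomp_eventually_of_orbit x c :
  eventually (fun s => orbit Phi alpha t x s = c) ->
  exists J, forall k, (J <= k)%coq_nat -> phicomp Phi alpha k x = c.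
Proof.
move: (Ht) => [incr unbd] [T HT]; have [J HJ] := unbd T.
exists J => k le_Jk; rewrite -(orbit_interval x (s := t k)); last by split; [lra | apply: incr; lia].
by apply: HT; have := strict_incr_le incr le_Jk; lra.
Qed.

Lemma omega_phicomp x y : omega Phi alpha t x y -> exists k, phicomp Phi alpha k x = y.
Proof.
move=> /omega_frequently /(_ (t 0%nat)) [s [/isSeq_interval [k Hk] <-]].
by exists k; rewrite (orbit_interval x Hk).
Qed.

End Orbits.

Lemma omega_eq_of_eventually_eq n Phi alpha t alpha' t' (x x' : Bn n) :
  eventually (fun s => orbit Phi alpha t x s = orbit Phi alpha' t' x' s) ->
  forall y, omega Phi alpha t x y <-> omega Phi alpha' t' x' y.
Proof.
move=> Heq y; rewrite !omega_frequently.
by split=> Hy; apply: frequently_mono (eventually_frequently Heq Hy) => s [E Ey]; congruence.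
Qed.

Lemma phicomp_fixpoint n Phi alpha (c : Bn n) k :
  Phi c = c -> phicomp Phi alpha k c = c.
Proof.
have phinu_c nu : Phi c = c -> phinu Phi nu c = c.
  by move=> Hc; apply/ffunP => i; rewrite ffunE Hc; case: (nu i).
by move=> Hc; elim: k => [|k IHk] /=; rewrite ?IHk phinu_c.
Qed.

Lemma orbit_fixpoint n Phi alpha t (c : Bn n) s :
  isSeq t -> Phi c = c -> orbit Phi alpha t c s = c.
Proof.
move=> Ht Hc; case: (orbit_spec Phi alpha Ht c s) => [[_ ->] | [k [_ ->]]] //.
exact: phicomp_fixpoint.
Qed.

Lemma fixpoint_of_eventually_orbit n Phi alpha t (x c : Bn n) :
  inPn alpha t -> eventually (fun s => orbit Phi alpha t x s = c) -> Phi c = c.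
Proof.
move=> [prog Ht] /(phicomp_eventually_of_orbit Ht) [J HJ].
apply/ffunP => i; have [k [le_Jk Hki]] := prog i J.+1.
case: k le_Jk Hki => [|k] le_Jk Hki; first lia.
have := HJ k.+1 ltac:(lia); rewrite /= HJ; last lia.
by move/(congr1 (fun y : Bn n => y i)); rewrite ffunE Hki.
Qed.

Lemma eventually_stationary (A : Type) (f : nat -> A) J :
  (forall j, (J <= j)%coq_nat -> f j.+1 = f j) ->
  forall k, (J <= k)%coq_nat -> f k = f J.
Proof.
move=> Hstat; elim=> [|k IHk] le_Jk; first by have -> : J = 0%nat by lia.
case: (Nat.eq_dec J k.+1) => [-> // | ne].
by rewrite Hstat; [apply: IHk | ]; lia.
Qed.

Lemma phicomp_ext n Phi (alpha beta : nat -> Bn n) k x :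
  (forall j, (j <= k)%coq_nat -> alpha j = beta j) ->
  phicomp Phi alpha k x = phicomp Phi beta k x.
Proof.
elim: k => [|k IHk] Hab /=; first by rewrite Hab.
by rewrite Hab ?IHk // => j le_jk; apply: Hab; lia.
Qed.

Section Splice.
Variables (n : nat) (Phi : Bn n -> Bn n) (alpha beta : nat -> Bn n) (t : nat -> R).
Variables (k m : nat).

Definition splice_alpha (j : nat) : Bn n :=
  if (j <= k)%N then beta j else alpha (j - k + m)%N.

(* The first k + 1 jumps (those of beta) happen just before t m.+1; from then
   on the jumps of alpha happen at alpha's own times. *)
Definition splice_time (j : nat) : R :=
  if (j <= k)%N then t m.+1 - INR (k.+1 - j) else t (j - k + m)%N.

Lemma splice_time_tail j : (k < j)%coq_nat -> splice_time j = t (j - k + m)%N.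
Proof. by rewrite /splice_time; case: ifP => //; lia. Qed.

Lemma phicomp_splice x mu :
  phicomp Phi beta k x = phicomp Phi alpha m mu ->
  forall d, phicomp Phi splice_alpha (k + d) x = phicomp Phi alpha (m + d) mu.
Proof.
move=> meet; elim=> [|d IHd].
  rewrite !addn0 -meet; apply: phicomp_ext => j le_jk.
  by rewrite /splice_alpha; case: ifP => //; lia.
rewrite !addnS /= IHd /splice_alpha; case: ifP => [|_]; first lia.
by congr (phinu _ (alpha _) _); lia.
Qed.

Lemma splice_progressive : progressive alpha -> progressive splice_alpha.
Proof.
move=> prog i j; have [j' [le_j' Hj']] := prog i (j + m).+1.
exists (j' - m + k)%N; split; first lia.
rewrite /splice_alpha; case: ifP => [le_k | _]; first lia.
by have -> : (j' - m + k - k + m)%N = j' by lia.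
Qed.

Lemma splice_isSeq : isSeq t -> isSeq splice_time.
Proof.
move=> [incr unbd].
have succ j : splice_time j < splice_time j.+1.
  rewrite /splice_time; case: ifP => le_jk; case: ifP => le_Sjk; try lia.
  - by have := lt_INR (k.+1 - j.+1) (k.+1 - j) ltac:(lia); lra.
  - have -> : (j.+1 - k + m)%N = m.+1 by lia.
    have -> : (k.+1 - j)%N = 1%N by lia.
    by rewrite /=; lra.
  - by apply: incr; lia.
split; first exact: strict_incr_of_succ.
move=> M; have [K HK] := unbd M; exists (K + k).+1.
rewrite splice_time_tail; last lia.
by apply: Rlt_le_trans HK _; apply: (strict_incr_le incr); lia.
Qed.

Lemma orbit_splice x mu :
  isSeq t -> phicomp Phi beta k x = phicomp Phi alpha m mu ->
  forall s, t m.+1 <= s -> orbit Phi splice_alpha splice_time x s = orbit Phi alpha t mu s.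
Proof.
move=> Ht meet s Hs; have Ht2 := splice_isSeq Ht.
have [incr2 _] := Ht2.
have start : splice_time k.+1 = t m.+1.
  by rewrite splice_time_tail; [congr t; lia | lia].
case: (orbit_spec Phi splice_alpha Ht2 x s) => [[lt_s0 _] | [j [Hj ->]]].
  by have := incr2 0%nat k.+1 ltac:(lia); lra.
case: (Nat.le_gt_cases j k) => [le_jk | lt_kj].
  by have := strict_incr_le incr2 (k := j.+1) (k' := k.+1) ltac:(lia); lra.
have [d Ej] : exists d, j = (k + d)%N by exists (j - k)%N; lia.
subst j; rewrite (phicomp_splice meet) (orbit_interval Phi alpha Ht mu (k := (m + d)%N)) //.
have E1 : splice_time (k + d) = t (m + d)%N by rewrite splice_time_tail; [congr t | ]; lia.
have E2 : splice_time (k + d).+1 = t (m + d).+1 by rewrite splice_time_tail; [congr t | ]; lia.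
by rewrite -E1 -E2.
Qed.

End Splice.

Lemma Wbar_orb_of_phicomp_eq n Phi alpha beta t k m (x mu : Bn n) :
  inPn alpha t -> phicomp Phi beta k x = phicomp Phi alpha m mu ->
  Wbar_orb Phi alpha t mu x.
Proof.
move=> [prog Ht] meet; exists (splice_alpha alpha beta k m), (splice_time t k m).
split; first by split; [exact: splice_progressive | exact: splice_isSeq].
by exists (t m.+1) => s; apply: orbit_splice.
Qed.

Lemma Wbar_orb_eq_Wbar_om n Phi alpha t (mu : Bn n) :
  inPn alpha t -> eq_set (Wbar_orb Phi alpha t mu) (Wbar_om Phi alpha t mu).
Proof.
move=> Hrho x; split.
  move=> [alpha' [t' [Hrho' Heq]]]; exists alpha', t'; split=> //.
  exact: omega_eq_of_eventually_eq Heq.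
move=> [alpha' [t' [[_ Ht'] Hom]]].
have [y Hy] := omega_nonempty Phi alpha t mu.
have [k Hk] := omega_phicomp Ht' (proj2 (Hom y) Hy).
have [m Hm] := omega_phicomp (proj2 Hrho) Hy.
by apply: (Wbar_orb_of_phicomp_eq (beta := alpha') (k := k) (m := m) Hrho); rewrite Hk Hm.
Qed.

Lemma Or_sub_Wbar_orb n Phi alpha t (mu : Bn n) :
  inPn alpha t -> sub_set (Or Phi alpha t mu) (Wbar_orb Phi alpha t mu).
Proof.
move=> Hrho _ [s <-].
case: (orbit_spec Phi alpha (proj2 Hrho) mu s) => [[_ ->] | [k [_ ->]]].
  exact: (Wbar_orb_of_phicomp_eq (beta := alpha) (k := 0%nat) (m := 0%nat) Hrho erefl).
exact: (Wbar_orb_of_phicomp_eq (beta := fun=> alpha k.+1) (k := 0%nat) (m := k.+1) Hrho erefl).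
Qed.

Lemma Wund_orb_sub_Wund_om n Phi alpha t (mu : Bn n) :
  sub_set (Wund_orb Phi alpha t mu) (Wund_om Phi alpha t mu).
Proof. by move=> x Hx alpha' t' /Hx Heq; apply: omega_eq_of_eventually_eq Heq. Qed.

Lemma omega_singleton_of_Wund_orb n Phi alpha t (mu x : Bn n) :
  inPn alpha t -> Wund_orb Phi alpha t mu x -> singleton_set (omega Phi alpha t mu).
Proof.
move=> Hrho Hx; have [prog [incr unbd]] := Hrho.
pose tS k := t k.+1.
have HrhoS : inPn alpha tS.
  split=> //; split; first by move=> k k' lt_kk'; apply: incr; lia.
  by move=> M; have [K HK] := unbd M; exists K; have := incr K K.+1 ltac:(lia); rewrite /tS; lra.
have [T HT] := eventually_and (Hx _ _ Hrho) (Hx _ _ HrhoS).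
have [J HJ] := unbd T.
have stationary j : (J <= j)%coq_nat ->
    phicomp Phi alpha j.+1 x = phicomp Phi alpha j x.
  move=> le_Jj; have in_Sj : t j.+1 <= t j.+1 < t j.+2 by split; [lra | apply: incr; lia].
  rewrite -(orbit_interval Phi alpha (proj2 Hrho) x in_Sj).
  rewrite -(orbit_interval Phi alpha (proj2 HrhoS) x (k := j) in_Sj).
  have le_T : T <= t j.+1.
    by have := strict_incr_le incr (k := J) (k' := j.+1) ltac:(lia); lra.
  by have [-> ->] := HT _ le_T.
have Hx_c := eventually_orbit_of_phicomp (proj2 Hrho)
  (@eventually_stationary _ (fun j => phicomp Phi alpha j x) J stationary).
exists (phicomp Phi alpha J x); apply: omega_of_eventually_orbit.
by have [T' HT'] := eventually_and (Hx _ _ Hrho) Hx_c; exists T' => s /HT' [<-].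
Qed.

Lemma Wund_orb_of_omega_singleton n Phi alpha t (mu : Bn n) :
  inPn alpha t -> singleton_set (omega Phi alpha t mu) ->
  exists c, Wund_orb Phi alpha t mu c.
Proof.
move=> Hrho [c Hc].
have Hmu := @eventually_orbit_of_omega _ Phi alpha t mu c (fun y => proj1 (Hc y)).
have fix_c := fixpoint_of_eventually_orbit Hrho Hmu.
exists c => alpha' t' [_ Ht']; have [T HT] := Hmu.
by exists T => s Hs; rewrite orbit_fixpoint // HT.
Qed.

Lemma Wund_om_sub_Wund_orb n Phi alpha t (mu mu' : Bn n) :
  eq_set (omega Phi alpha t mu) (fun y => y = mu') ->
  sub_set (Wund_om Phi alpha t mu) (Wund_orb Phi alpha t mu).
Proof.
move=> Hmu x Hx alpha' t' Hrho'.
have ev_x := @eventually_orbit_of_omega _ Phi alpha' t' x mu'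
  (fun y Hy => proj1 (Hmu y) (proj1 (Hx _ _ Hrho' y) Hy)).
have ev_mu := @eventually_orbit_of_omega _ Phi alpha t mu mu' (fun y => proj1 (Hmu y)).
by have [T HT] := eventually_and ev_x ev_mu; exists T => s /HT [-> ->].
Qed.

Lemma Wund_om_eq_Wpt n Phi alpha t (mu mu' : Bn n) :
  eq_set (omega Phi alpha t mu) (fun y => y = mu') ->
  eq_set (Wund_om Phi alpha t mu) (Wpt Phi mu').
Proof.
move=> Hmu x; split.
  by move=> Hx alpha' t' Hrho' y /(Hx _ _ Hrho') /Hmu.
move=> Hx alpha' t' Hrho' y; rewrite Hmu; split; first exact: Hx.
move=> ->; have [z Hz] := omega_nonempty Phi alpha' t' x.
by rewrite -(Hx _ _ Hrho' _ Hz).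
Qed.

Theorem theorem51 (n : nat) (Hn : (1 <= n)%coq_nat)
  (Phi : Bn n -> Bn n) (mu : Bn n) (alpha : nat -> Bn n) (t : nat -> R)
  (Hrho : inPn alpha t) :
  (* a *) eq_set (Wbar_orb Phi alpha t mu) (Wbar_om Phi alpha t mu) /\
  (* b *) (sub_set (Or Phi alpha t mu) (Wbar_orb Phi alpha t mu) /\
           nonempty (Wbar_orb Phi alpha t mu)) /\
  (* c *) sub_set (Wund_orb Phi alpha t mu) (Wund_om Phi alpha t mu) /\
  (* d *) ((nonempty (Wund_orb Phi alpha t mu) <-> singleton_set (omega Phi alpha t mu)) /\
           (singleton_set (omega Phi alpha t mu) ->
              nonempty (Wund_orb Phi alpha t mu) /\ nonempty (Wund_om Phi alpha t mu))) /\
  (* e *) (forall mu' : Bn n,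
             eq_set (omega Phi alpha t mu) (fun x => x = mu') ->
             eq_set (Wund_orb Phi alpha t mu) (Wund_om Phi alpha t mu) /\
             eq_set (Wund_om Phi alpha t mu) (Wpt Phi mu')).
Proof.
have Wund_orb_nonempty_iff :
    nonempty (Wund_orb Phi alpha t mu) <-> singleton_set (omega Phi alpha t mu).
  split; first by move=> [x]; apply: omega_singleton_of_Wund_orb.
  exact: Wund_orb_of_omega_singleton.
split; first exact: Wbar_orb_eq_Wbar_om.
split; first by split; [exact: Or_sub_Wbar_orb | exists mu, alpha, t; split=> //; exists 0].
split; first exact: Wund_orb_sub_Wund_om.
split.
  split=> // /Wund_orb_nonempty_iff [x Hx].
  by split; exists x => //; apply: Wund_orb_sub_Wund_om.
move=> mu' Hmu; split; last exact: Wund_om_eq_Wpt.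
by move=> x; split; [apply: Wund_orb_sub_Wund_om | apply: Wund_om_sub_Wund_orb Hmu x].
Qed.
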